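(* Let refund schemes $(R_j)_{j\in P}$ satisfying Contribution Monotonicity be given. Then there exist instances of the combinatorial civic crowdfunding game $\mathcal{M}_{CC}$ using these refund schemes, satisfying Budget Surplus $\sum_{i\in N}\gamma_i \ge \sum_{j\in P} T_j$ and with refund bonuses $B_j=\vartheta_j-T_j$ for all $j\in P$, for which there is no pure strategy Nash equilibrium, i.e., the set of equilibrium contribution profiles is empty.
   Context: Combinatorial civic crowdfunding game $\mathcal{M}_{CC}=\langle P,N,\gamma,T,(\vartheta_j)_{j\in P},(R_j)_{j\in P},(B_j)_{j\in P}\rangle$: projects $P=\{1,\dots,p\}$ with target costs $T_j>0$; agents $N=\{1,\dots,n\}$ with budgets $\gamma_i\ge 0$ and private valuations $\theta_{ij}\ge 0$ for project $j$; $\vartheta_j=\sum_{i\in N}\theta_{ij}$, and it is assumed that $\vartheta_j>T_j$ for every $j$. Agent $i$ chooses contributions $x_{ij}\in\mathbb{R}_+$ with $\sum_{j\in P}x_{ij}\le\gamma_i$; $C_j=\sum_{i\in N}x_{ij}$. Project $j$ is funded iff $C_j\ge T_j$. A refund scheme for project $j$ is an anonymous function $R_j(B_j,x_{ij},C_j)\in\mathbb{R}_+$ giving agent $i$'s refund $r_{ij}$, with refund bonus $B_j>0$ and $\sum_{i\in N}r_{ij}=B_j$. Agent $i$'s utility from project $j$ is $\sigma_{ij}=\theta_{ij}-x_{ij}$ (funded utility $\sigma^F_{ij}$) if $C_j\ge T_j$, and $\sigma_{ij}=r_{ij}$ (unfunded utility $\sigma^U_{ij}$) if $C_j<T_j$;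 total utility $U_i=\sum_{j\in P}\sigma_{ij}$. A contribution profile is a pure strategy Nash equilibrium (PSNE) if no agent can increase its total utility by unilaterally changing its feasible contribution vector. Contribution Monotonicity (CM): $R_j$ is differentiable and strictly increasing in the contribution $x$, i.e., $\partial R_j/\partial x>0$. *)

From HB Require Import structures.
From mathcomp Require Import all_boot all_order all_algebra.
From mathcomp Require Import all_classical all_reals all_analysis.
Set Implicit Arguments. Unset Strict Implicit. Unset Printing Implicit Defensive.
Import Order.TTheory GRing.Theory Num.Theory.
Import numFieldNormedType.Exports.
Local Open Scope ring_scope.

Section CCgame.
Variable R : realType.

(* A refund scheme: an anonymous function  Rf B x C  giving the refund of an
   agent contributing x when the total contribution is C and the refund bonus
   is B. *)
Definition refund_scheme (Rf : R -> R -> R -> R) : Prop :=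
  (forall B x C : R, 0 < B -> 0 <= x -> x <= C -> 0 <= Rf B x C) /\
  (forall (B : R) (n : nat) (x : 'I_n -> R), 0 < B -> (forall i, 0 <= x i) ->
     0 < \sum_(i < n) x i ->
     \sum_(i < n) Rf B (x i) (\sum_(k < n) x k) = B) /\
  (forall B : R, Rf B 0 0 = 0).

Definition contribution_monotone (Rf : R -> R -> R -> R) : Prop :=
  forall B x C : R, 0 < B -> 0 < C -> 0 <= x -> x <= C ->
    exists df : R, is_derive x (1 : R) (fun y : R => Rf B y C) df /\ 0 < df.

Variables (n p : nat).

Definition total (x : 'I_n -> 'I_p -> R) (j : 'I_p) : R :=
  \sum_(i < n) x i j.

Definition feasible_vec (g : R) (y : 'I_p -> R) : Prop :=
  (forall j, 0 <= y j) /\ \sum_(j < p) y j <= g.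

Definition feasible (gamma : 'I_n -> R) (x : 'I_n -> 'I_p -> R) : Prop :=
  forall i, feasible_vec (gamma i) (x i).

Definition vartheta (theta : 'I_n -> 'I_p -> R) (j : 'I_p) : R :=
  \sum_(i < n) theta i j.

Definition sigma (Rf : 'I_p -> R -> R -> R -> R) (B T : 'I_p -> R)
  (theta x : 'I_n -> 'I_p -> R) (i : 'I_n) (j : 'I_p) : R :=
  if T j <= total x j then theta i j - x i j
  else Rf j (B j) (x i j) (total x j).

Definition utility (Rf : 'I_p -> R -> R -> R -> R) (B T : 'I_p -> R)
  (theta x : 'I_n -> 'I_p -> R) (i : 'I_n) : R :=
  \sum_(j < p) sigma Rf B T theta x i j.

Definition deviate (x : 'I_n -> 'I_p -> R) (i : 'I_n) (y : 'I_p -> R)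
  : 'I_n -> 'I_p -> R :=
  fun k => if k == i then y else x k.

Definition PSNE (Rf : 'I_p -> R -> R -> R -> R) (B T gamma : _)
  (theta x : 'I_n -> 'I_p -> R) : Prop :=
  feasible gamma x /\
  forall i (y : 'I_p -> R), feasible_vec (gamma i) y ->
    utility Rf B T theta (deviate x i y) i <= utility Rf B T theta x i.

Definition valid_instance (gamma : 'I_n -> R) (theta : 'I_n -> 'I_p -> R)
  (T : 'I_p -> R) : Prop :=
  (forall i, 0 <= gamma i) /\ (forall i j, 0 <= theta i j) /\
  (forall j, 0 < T j) /\ (forall j, T j < vartheta theta j).

End CCgame.

(* Budget balance for every number of agents makes a |-> R(B, a, C) additive and
   nonnegative on [0, C], hence linear: R(B, a, C) = B a / C.

   In the instance, p projects have target 1; a free rider values nothing and has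
   budget p - 1/2, a supporter values every project at 2 and has budget 1/2, so the
   bonus is 1 and the budgets add up to p.  In an equilibrium no project is funded:
   the free rider would withdraw from it, and the supporter cannot fund it alone.
   An agent with unspent budget would then add a little to an unfunded project that
   it does not finance alone (or that nobody finances), raising its proportional
   refund.  So both budgets are spent, and the totals add up to p although each of
   them is below 1. *)

From Pilot Require Import Defs.
From HB Require Import structures.
From mathcomp Require Import all_boot all_order all_algebra.
From mathcomp Require Import all_classical all_reals all_analysis.
From mathcomp.algebra_tactics Require Import ring lra.
Import Order.TTheory GRing.Theory Num.Theory.
Local Open Scope ring_scope.

Lemma le_of_le_add_natinv (R : archiRealFieldType) (a b c : R) :
  (forall N : nat, (0 < N)%N -> a <= b + c / N%:R) -> a <= b.
Proof.
move=> le_ab; apply/ler_addgt0Pr => e e_gt0.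
pose N := (Num.truncn (c / e)).+1.
have N_gt0 : (0 : R) < N%:R by rewrite ltr0n.
have c_lt : c / N%:R < e.
  by have := truncnS_gt (c / e); rewrite ltr_pdivrMr // ltr_pdivrMr // mulrC.
by apply: le_trans (le_ab N isT) _; rewrite lerD2l ltW.
Qed.

Section AdditiveOnInterval.
Variables (R : archiRealFieldType) (C : R) (f : R -> R).
Hypothesis C_gt0 : 0 < C.
Hypothesis f_add : forall {a b : R}, 0 <= a -> 0 <= b -> a + b <= C ->
  f (a + b) = f a + f b.
Hypothesis f_ge0 : forall {a : R}, 0 <= a -> a <= C -> 0 <= f a.

Lemma additive_nondecreasing (a b : R) : 0 <= a -> a <= b -> b <= C -> f a <= f b.
Proof.
move=> a_ge0 le_ab b_le; have -> : b = a + (b - a) by ring.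
rewrite f_add; [|lra|lra|lra].
have := @f_ge0 (b - a); lra.
Qed.

Lemma additive_natmul (k : nat) (h : R) : 0 <= h -> k%:R * h <= C ->
  f (k%:R * h) = k%:R * f h.
Proof.
move=> h_ge0; elim: k => [|k IHk] kh_le.
  by have := f_add (lexx 0) (lexx 0); rewrite !mul0r addr0 => /(_ (ltW C_gt0)); lra.
have kh_ge0 : 0 <= k%:R * h by rewrite mulr_ge0.
rewrite -natr1 mulrDl mul1r f_add // ?IHk; try lra.
Qed.

Lemma additive_lower_bound (x : R) (N : nat) : (0 < N)%N -> 0 <= x -> x <= C ->
  f C * (x / C) - f C / N%:R <= f x.
Proof.
rewrite -(ltr0n R) => N_gt0 x_ge0 x_le; rewrite -mulrBr.
(* compare x with the grid point m C / N below it, m = floor (N x / C) *)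
have /andP[m_le m_gt] :=
  truncn_itv (divr_ge0 (mulr_ge0 (ltW N_gt0) x_ge0) (ltW C_gt0)).
move: (Num.truncn _) m_le m_gt => m m_le m_gt.
have step_ge0 : 0 <= C / N%:R by rewrite divr_ge0 ?ltW.
have f_step : f (C / N%:R) = f C / N%:R.
  have := @additive_natmul N (C / N%:R) step_ge0.
  rewrite mulrC divfK ?gt_eqF // => /(_ (lexx C)) ->.
  by field; rewrite gt_eqF.
have m_step : m%:R * (C / N%:R) <= x.
  by rewrite mulrA ler_pdivrMr //; rewrite ler_pdivlMr // in m_le; lra.
have m_frac : x / C - N%:R^-1 <= m%:R / N%:R.
  rewrite ler_pdivlMr // mulrBl mulVf ?gt_eqF //.
  by rewrite -natr1 in m_gt; lra.
have f_C_ge0 : 0 <= f C by apply: f_ge0; lra.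
apply: le_trans (additive_nondecreasing _ _ _ m_step x_le).
  by rewrite additive_natmul ?(le_trans m_step) // f_step mulrCA ler_wpM2l.
by rewrite mulr_ge0.
Qed.

Lemma additive_linear (x : R) : 0 <= x -> x <= C -> f x = f C * (x / C).
Proof.
move=> x_ge0 x_le.
have f_compl : f x + f (C - x) = f C.
  by rewrite -f_add ?subrKC //; lra.
have f_C_compl : f C * ((C - x) / C) = f C - f C * (x / C).
  by field; rewrite gt_eqF.
apply/eqP; rewrite eq_le; apply/andP; split;
  apply: (@le_of_le_add_natinv _ _ _ (f C)) => N N_gt0.
  have := @additive_lower_bound (C - x) N N_gt0 ltac:(lra) ltac:(lra).
  by rewrite f_C_compl => ?; lra.
by have := @additive_lower_bound x N N_gt0 x_ge0 x_le => ?; lra.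
Qed.
End AdditiveOnInterval.

Section ProportionalRefund.
Context {R : realType} {Rf : R -> R -> R -> R} {B : R}.
Hypotheses (Rf_scheme : refund_scheme Rf) (B_gt0 : 0 < B).

Lemma refund_balance (s : seq R) : all (>= 0) s -> 0 < \sum_(c <- s) c ->
  \sum_(a <- s) Rf B a (\sum_(c <- s) c) = B.
Proof.
move=> /allP s_ge0 s_gt0; case: Rf_scheme => _ [balance _].
rewrite [in LHS](big_nth 0) big_mkord (big_nth 0) big_mkord.
rewrite (big_nth 0) big_mkord in s_gt0.
apply: balance => // i; apply: s_ge0; exact: mem_nth.
Qed.

Lemma refund_full (C : R) : 0 < C -> Rf B C C = B.
Proof.
move=> C_gt0; have := @refund_balance [:: C]; rewrite !big_seq1; apply => //=.
by rewrite andbT ltW.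
Qed.

Lemma refund_additive (C a b : R) : 0 < C -> 0 <= a -> 0 <= b -> a + b <= C ->
  Rf B (a + b) C = Rf B a C + Rf B b C.
Proof.
move=> C_gt0 a_ge0 b_ge0 ab_le.
have rest_ge0 : 0 <= C - (a + b) by rewrite subr_ge0.
have := @refund_balance [:: a + b; C - (a + b)].
have := @refund_balance [:: a; b; C - (a + b)].
rewrite !big_cons !big_nil /= !addr0 addrA subrKC !andbT.
rewrite a_ge0 b_ge0 rest_ge0 addr_ge0 //=.
by move=> /(_ isT C_gt0) balance3 /(_ isT C_gt0) balance2; lra.
Qed.

Lemma refund_ge0 {C a : R} : 0 <= a -> a <= C -> 0 <= Rf B a C.
Proof. by case: Rf_scheme => Rf_ge0 _; apply: Rf_ge0. Qed.

Lemma refund_proportional (C x : R) : 0 < C -> 0 <= x -> x <= C ->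
  Rf B x C = B * (x / C).
Proof.
move=> C_gt0 x_ge0 x_le; rewrite -{2}(refund_full _ C_gt0).
apply: (@additive_linear _ C (fun y => Rf B y C)) => // [a b|a a_ge0 a_le].
  exact: refund_additive.
exact: refund_ge0.
Qed.

Lemma refund_increase {C x e : R} : 0 <= x -> x <= C -> x < C \/ C = 0 -> 0 < e ->
  Rf B x C < Rf B (x + e) (C + e).
Proof.
move=> x_ge0 x_le [x_lt | C0] e_gt0; last first.
  have x0 : x = 0 by lra.
  rewrite C0 x0 !add0r (refund_full _ e_gt0).
  by case: Rf_scheme => _ [_ ->].
have C_gt0 : 0 < C by lra.
have Ce_gt0 : 0 < C + e by lra.
rewrite !refund_proportional; try lra.
by rewrite ltr_pM2l // ltr_pdivrMr // mulrAC ltr_pdivlMr //; nra.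
Qed.
End ProportionalRefund.

Lemma ler_term_sum {R : numDomainType} {I : finType} {F : I -> R} (i : I) :
  (forall j, 0 <= F j) -> F i <= \sum_j F j.
Proof. by move=> F_ge0; rewrite (bigD1 i) //= lerDl sumr_ge0. Qed.

Section Deviation.
Context {R : realType} {n p : nat}.
Implicit Types (x : 'I_n -> 'I_p -> R) (y : 'I_p -> R).

Definition update y (j : 'I_p) (v : R) : 'I_p -> R :=
  fun j' => if j' == j then v else y j'.

Lemma sum_update y j v :
  \sum_(j' < p) update y j v j' = \sum_(j' < p) y j' - y j + v.
Proof.
rewrite (bigD1 j) //= [in RHS](bigD1 j) //= /update eqxx.
rewrite (eq_bigr y); first lra.
by move=> j' /negbTE ->.
Qed.

Lemma total_deviate x i y j :
  Defs.total (deviate x i y) j = Defs.total x j - x i j + y j.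
Proof.
rewrite /Defs.total (bigD1 i) //= [in RHS](bigD1 i) //= /deviate eqxx.
rewrite (eq_bigr (x^~ j)); first lra.
by move=> k /negbTE ->.
Qed.

Lemma contrib_lt_total {x i k j} : (forall l, 0 <= x l j) -> k != i ->
  0 < x k j -> x i j < Defs.total x j.
Proof.
move=> x_ge0 ki xk_gt0; rewrite /Defs.total (bigD1 i) //= ltrDl.
rewrite (bigD1 k) //=; apply: ltr_wpDr => //.
exact: sumr_ge0.
Qed.

Context {Rf : 'I_p -> R -> R -> R -> R} {B T : 'I_p -> R}.
Context {gamma : 'I_n -> R} {theta : 'I_n -> 'I_p -> R}.
Local Notation sg := (sigma Rf B T theta).
Local Notation U := (utility Rf B T theta).

Lemma utility_deviate_update x i j v :
  U (deviate x i (update (x i) j v)) i =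
  U x i - sg x i j + sg (deviate x i (update (x i) j v)) i j.
Proof.
rewrite /utility (bigD1 j) //= [in RHS](bigD1 j) //=.
rewrite (eq_bigr (sg x i)); first lra.
move=> j' j'j; rewrite /sigma total_deviate /deviate eqxx /update (negbTE j'j).
by rewrite subrK.
Qed.

Lemma PSNE_update_sigma_le {x i j v} : PSNE Rf B T gamma theta x -> 0 <= v ->
  \sum_(j' < p) x i j' - x i j + v <= gamma i ->
  sg (deviate x i (update (x i) j v)) i j <= sg x i j.
Proof.
move=> [x_feasible x_best] v_ge0 v_budget.
have feasible_update : feasible_vec (gamma i) (update (x i) j v).
  split; last by rewrite sum_update.
  by move=> j'; rewrite /update; case: eqP => // _; case: (x_feasible i).
have := x_best i _ feasible_update; rewrite utility_deviate_update; lra.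
Qed.
End Deviation.

Section TwoAgentInstance.
Variables (R : realType) (p : nat) (Rf : 'I_p -> R -> R -> R -> R).
Hypotheses (p_gt0 : (0 < p)%N) (Rf_scheme : forall j, refund_scheme (Rf j)).

Definition free_rider : 'I_2 := ord0.
Definition supporter : 'I_2 := ord_max.

Definition two_budget : 'I_2 -> R :=
  fun i => if i == free_rider then p%:R - 2^-1 else 2^-1.
Definition two_value : 'I_2 -> 'I_p -> R :=
  fun i _ => if i == free_rider then 0 else 2.
Definition two_target : 'I_p -> R := fun _ => 1.

Local Notation bonus := (fun j => vartheta two_value j - two_target j).
Local Notation sg := (sigma Rf bonus two_target two_value).
Local Notation equilibrium := (PSNE Rf bonus two_target two_budget two_value).

Lemma supporter_neq_free_rider : supporter != free_rider.
Proof. by []. Qed.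

Lemma sum_two (F : 'I_2 -> R) : \sum_(i < 2) F i = F free_rider + F supporter.
Proof. by rewrite big_ord_recl big_ord1; congr (_ + F _); apply: val_inj. Qed.

Lemma two_bonus j : vartheta two_value j - two_target j = 1.
Proof. by rewrite /vartheta sum_two /two_value /two_target /=; lra. Qed.

Lemma two_sigmaE x i j : sg x i j =
  if 1 <= Defs.total x j then two_value i j - x i j
  else Rf j 1 (x i j) (Defs.total x j).
Proof. by rewrite /sigma two_bonus. Qed.

Lemma two_budget_sum : \sum_(i < 2) two_budget i = p%:R.
Proof. by rewrite sum_two /two_budget /=; lra. Qed.

Section Equilibrium.
Context {x : 'I_2 -> 'I_p -> R} (x_eq : equilibrium x).

Let x_ge0 i j : 0 <= x i j.
Proof. by case: x_eq => x_feasible _; case: (x_feasible i). Qed.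

Let x_budget i : \sum_(j < p) x i j <= two_budget i.
Proof. by case: x_eq => x_feasible _; case: (x_feasible i). Qed.

Let total_two j : Defs.total x j = x free_rider j + x supporter j.
Proof. exact: sum_two. Qed.

Lemma equilibrium_unfunded j : Defs.total x j < 1.
Proof.
rewrite ltNge; apply/negP => funded.
have [xj_gt0|xj_le0] := ltrP 0 (x free_rider j); last first.
  have := ler_term_sum j (x_ge0 supporter); have := x_budget supporter.
  by rewrite total_two /two_budget /= in funded * => ? ?; lra.
have withdraw_ok :
    \sum_(j' < p) x free_rider j' - x free_rider j + 0 <= two_budget free_rider.
  by have := x_budget free_rider; lra.
have := PSNE_update_sigma_le x_eq (lexx 0) withdraw_ok.
rewrite !two_sigmaE funded total_deviate /deviate eqxx /update eqxx /two_value eqxx.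
have rest_ge0 : 0 <= Defs.total x j - x free_rider j + 0.
  by rewrite total_two; have := x_ge0 supporter j; lra.
have := refund_ge0 (Rf_scheme j) ltr01 (lexx 0) rest_ge0.
by case: ifP => _ ? ?; lra.
Qed.

Let positive_contrib i : \sum_(j < p) x i j != 0 -> exists j, 0 < x i j.
Proof. by rewrite psumr_neq0 // => /hasP[j _ xj_gt0]; exists j. Qed.

Lemma equilibrium_no_slack i j : \sum_(j' < p) x i j' < two_budget i ->
  x i j < Defs.total x j \/ Defs.total x j = 0 -> False.
Proof.
move=> slack share.
pose s := two_budget i - \sum_(j' < p) x i j'; pose t := 1 - Defs.total x j.
have s_gt0 : 0 < s by rewrite subr_gt0.
have t_gt0 : 0 < t by rewrite subr_gt0 equilibrium_unfunded.
pose e := Num.min s t / 2.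
have e_gt0 : 0 < e by rewrite divr_gt0 // lt_min s_gt0.
have e_le_s : e <= s.
  have : Num.min s t <= s by rewrite ge_min lexx.
  rewrite /e; lra.
have e_lt_t : e < t.
  have : Num.min s t <= t by rewrite ge_min lexx orbT.
  rewrite /e; lra.
have raise_ok : \sum_(j' < p) x i j' - x i j + (x i j + e) <= two_budget i.
  by rewrite /s in e_le_s; lra.
have := PSNE_update_sigma_le x_eq (addr_ge0 (x_ge0 i j) (ltW e_gt0)) raise_ok.
rewrite !two_sigmaE total_deviate /deviate eqxx /update eqxx.
have -> : Defs.total x j - x i j + (x i j + e) = Defs.total x j + e by ring.
rewrite !ifN -?ltNge; try by rewrite /t in t_gt0 e_lt_t; lra.
have := refund_increase (Rf_scheme j) ltr01 (x_ge0 i j) (ler_term_sum i (x_ge0^~ j)).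
by move=> /(_ e share e_gt0) ? ?; lra.
Qed.

Lemma equilibrium_free_rider_spent :
  two_budget free_rider <= \sum_(j < p) x free_rider j.
Proof.
rewrite leNgt; apply/negP => slack.
have [idle|/positive_contrib[j xj_gt0]] := eqVneq (\sum_(j < p) x supporter j) 0.
  have supporter_slack : \sum_(j < p) x supporter j < two_budget supporter.
    by rewrite idle /two_budget /= invr_gt0 ltr0n.
  pose j0 := Ordinal p_gt0.
  apply: (equilibrium_no_slack supporter j0 supporter_slack).
  rewrite total_two (psumr_eq0P (fun j _ => x_ge0 supporter j) idle) // addr0.
  have := x_ge0 free_rider j0; have [|] := ltrP 0 (x free_rider j0); [left|right]; lra.
apply: (equilibrium_no_slack free_rider j slack); left.
exact: contrib_lt_total (x_ge0^~ j) supporter_neq_free_rider xj_gt0.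
Qed.

Lemma equilibrium_supporter_spent :
  two_budget supporter <= \sum_(j < p) x supporter j.
Proof.
rewrite leNgt; apply/negP => slack.
have [j xj_gt0] : exists j, 0 < x free_rider j.
  apply: positive_contrib; apply/eqP => sum0.
  have p_ge1 : (1 : R) <= p%:R by rewrite ler1n.
  by have := equilibrium_free_rider_spent; rewrite sum0 /two_budget /=; lra.
apply: (equilibrium_no_slack supporter j slack); left.
apply: contrib_lt_total (x_ge0^~ j) _ xj_gt0.
by rewrite eq_sym supporter_neq_free_rider.
Qed.
End Equilibrium.

Lemma two_no_PSNE x : ~ equilibrium x.
Proof.
move=> x_eq.
have : \sum_(j < p) Defs.total x j < \sum_(j < p) 1.
  apply: ltr_sum => [|j _]; last exact: equilibrium_unfunded x_eq j.
  by apply/hasP; exists (Ordinal p_gt0); rewrite ?mem_index_enum.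
rewrite /Defs.total exchange_big sum_two sumr_const card_ord.
have := equilibrium_free_rider_spent x_eq; have := equilibrium_supporter_spent x_eq.
by have := two_budget_sum; rewrite sum_two => ? ? ?; lra.
Qed.
End TwoAgentInstance.

Theorem theorem2 (R : realType) (p : nat) (Rf : 'I_p -> R -> R -> R -> R) :
  (0 < p)%N ->
  (forall j, refund_scheme (Rf j)) ->
  (forall j, contribution_monotone (Rf j)) ->
  exists (n : nat) (gamma : 'I_n -> R) (theta : 'I_n -> 'I_p -> R)
         (T : 'I_p -> R),
    valid_instance gamma theta T /\
    \sum_(j < p) T j <= \sum_(i < n) gamma i /\
    forall x : 'I_n -> 'I_p -> R,
      ~ PSNE Rf (fun j => vartheta theta j - T j) T gamma theta x.
Proof.
move=> p_gt0 Rf_scheme _.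
exists 2%N, (two_budget R p), (two_value R p), (two_target R p).
have p_ge1 : (1 : R) <= p%:R by rewrite ler1n.
split; [split; [|split; [|split]]|split].
- by move=> i; rewrite /two_budget; case: ifP => _; lra.
- by move=> i j; rewrite /two_value; case: ifP.
- by move=> j; rewrite /two_target ltr01.
- by move=> j; have := two_bonus R p j; lra.
- by rewrite two_budget_sum /two_target sumr_const card_ord.
- exact: (@two_no_PSNE R p Rf p_gt0 Rf_scheme).
Qed.
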